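(* Let $a\in\mathbb{C}$, $b\in\mathbb{C}$, $c\in\mathbb{C}\setminus\{0\}$, and let $S_n(x)\sim\left(\left(\frac{e^t-1}{t}\right)^a,\ \frac{t^2e^{bt}}{e^{ct}-1}\right)$. Then for $n\ge1$, $$S_n(x)=\sum_{l=0}^{n-1}\sum_{j=0}^{n-1-l}\frac{\binom{n-1}{l}}{\binom{l+n}{l}}\binom{n-1-l}{j}S_2(l+n,n)\,c^{n+l}(-nb)^j\,B_{n-l-j}^{(a)}(x).$$
   Context: For invertible $g(t)$ (nonzero constant term) and delta series $f(t)$ ($f(0)=0$, nonzero coefficient of $t$), the Sheffer sequence $S_n(x)\sim(g(t),f(t))$ is the unique polynomial sequence with $\sum_{k\ge0}S_k(y)\frac{t^k}{k!}=\frac{1}{g(\bar f(t))}e^{y\bar f(t)}$ for all $y\in\mathbb{C}$, where $\bar f$ is the compositional inverse of $f$. Complex powers of series with constant term $1$ are defined by $h^a=\exp(a\log h)$. The Bernoulli polynomials of order $a$ are defined by $\left(\frac{t}{e^t-1}\right)^a e^{xt}=\sum_{n\ge0}B_n^{(a)}(x)\frac{t^n}{n!}$. The Stirling numbers of the second kind are defined by $(e^t-1)^n=n!\sum_{k\ge n}S_2(k,n)\frac{t^k}{k!}$. *)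

(* Formal power series over a field R are represented by their
   coefficient sequences  nat -> R  (coefficient of t^n). *)
From HB Require Import structures.
From mathcomp Require Import all_boot all_order all_algebra.
Set Implicit Arguments. Unset Strict Implicit. Unset Printing Implicit Defensive.
Import Order.TTheory GRing.Theory Num.Theory.
Local Open Scope ring_scope.

Section FPS.
Variable R : fieldType.

Definition fps := nat -> R.

Definition fps_const (c : R) : fps := fun n => if n is 0%N then c else 0.
Definition fps_X : fps := fun n => if n == 1%N then 1 else 0.
Definition fps_add (f g : fps) : fps := fun n => f n + g n.
Definition fps_sub (f g : fps) : fps := fun n => f n - g n.
Definition fps_scale (c : R) (f : fps) : fps := fun n => c * f n.
Definition fps_mul (f g : fps) : fps :=
  fun n => \sum_(i < n.+1) f i * g (n - i)%N.
Definition fps_expn (f : fps) (k : nat) : fps := iter k (fps_mul f) (fps_const 1).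
(* composition f(g(t)), meaningful when g 0 = 0 *)
Definition fps_comp (f g : fps) : fps :=
  fun n => \sum_(k < n.+1) f k * fps_expn g k n.
Definition fps_mulX (f : fps) : fps := fun n => if n is k.+1 then f k else 0.
Definition fps_divX (f : fps) : fps := fun n => f n.+1.

Definition fps_expS (c : R) : fps := fun n => c ^+ n / (n`!)%:R.
(* exp(h) for h(0) = 0 *)
Definition fps_exp (h : fps) : fps := fps_comp (fps_expS 1) h.
(* log(1+u) = sum_{k>=1} (-1)^{k+1} u^k / k *)
Definition fps_logS : fps :=
  fun k => if k is 0%N then 0 else (-1) ^+ k.+1 / k%:R.
(* log(h) for h(0) = 1 *)
Definition fps_log (h : fps) : fps := fps_comp fps_logS (fps_sub h (fps_const 1)).
(* h^a := exp(a log h), for h(0) = 1 *)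
Definition fps_pow (h : fps) (a : R) : fps := fps_exp (fps_scale a (fps_log h)).
(* multiplicative inverse 1/h for h(0) != 0, via the geometric series:
   1/h = h0^{-1} * sum_k (1 - h/h0)^k *)
Definition fps_inv (h : fps) : fps :=
  fps_scale (h 0%N)^-1
    (fps_comp (fun _ => 1) (fps_sub (fps_const 1) (fps_scale (h 0%N)^-1 h))).

(* Sheffer sequence S ~ (g, f): there is the compositional inverse fb of f
   (fb(0) = 0, f(fb(t)) = t) and for all y,
   sum_k S_k(y) t^k / k! = (1 / g(fb(t))) * e^{y fb(t)}. *)
Definition is_sheffer (g f : fps) (S : nat -> {poly R}) : Prop :=
  exists fb : fps,
    fb 0%N = 0 /\ (forall n, fps_comp f fb n = fps_X n) /\
    forall (y : R) (n : nat),
      (S n).[y] / (n`!)%:R = fps_mul (fps_inv (fps_comp g fb)) (fps_exp (fps_scale y fb)) n.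

Definition fps_eT : fps := fps_divX (fps_sub (fps_expS 1) (fps_const 1)).

(* Bernoulli polynomials of order a:  (t/(e^t-1))^a e^{xt} = sum B_n^{(a)}(x) t^n/n! *)
Definition bernoulli_ord (a x : R) (n : nat) : R :=
  (n`!)%:R * fps_mul (fps_pow (fps_inv fps_eT) a) (fps_exp (fps_scale x fps_X)) n.

(* Stirling numbers of the second kind: (e^t-1)^n = n! sum_k S2(k,n) t^k/k! *)
Definition stirling2 (k n : nat) : R :=
  (k`!)%:R / (n`!)%:R * fps_expn (fps_sub (fps_expS 1) (fps_const 1)) n k.

End FPS.

(* The proof is Lagrange inversion.  Lagrange
   inversion (n [t^n] u^k = k [t^(n-k)] psi^(-n) when u inverts t psi(t)) then
   expresses any Sheffer sequence for (g, t psi) through the Appell sequence of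
   g with weights from psi^(-n).  For the theorem, psi^(-n) = ((e^{ct}-1)/t)^n
   e^{-nbt} has Stirling-number coefficients, the Appell sequence of
   ((e^t-1)/t)^a is the Bernoulli sequence of order a, and reindexing the
   resulting sum over k + l + j = n - 1 gives the formula. *)
From HB Require Import structures.
From mathcomp Require Import all_boot all_order all_algebra.
From mathcomp Require Import boolp ring zify.
Set Implicit Arguments. Unset Strict Implicit. Unset Printing Implicit Defensive.
Import Order.TTheory GRing.Theory Num.Theory.
Local Open Scope ring_scope.

(* Power series are functions, so equality is decided classically. *)
HB.instance Definition _ (R : fieldType) := gen_eqMixin (fps R).
HB.instance Definition _ (R : fieldType) := gen_choiceMixin (fps R).

Section AdditiveGroup.
Variable R : fieldType.
Local Notation F := (fps R).

Definition fps_opp (f : F) : F := fun n => - f n.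

Lemma fps_addA : associative (@fps_add R).
Proof. by move=> f g h; apply: funext => n; rewrite /fps_add addrA. Qed.

Lemma fps_addC : commutative (@fps_add R).
Proof. by move=> f g; apply: funext => n; rewrite /fps_add addrC. Qed.

Lemma fps_add0 : left_id (fps_const 0) (@fps_add R).
Proof. by move=> f; apply: funext => -[|n]; rewrite /fps_add /= add0r. Qed.

Lemma fps_addN : left_inverse (fps_const 0) fps_opp (@fps_add R).
Proof. by move=> f; apply: funext => -[|n]; rewrite /fps_add /fps_opp /= addNr. Qed.

End AdditiveGroup.

HB.instance Definition _ (R : fieldType) :=
  GRing.isZmodule.Build (fps R) (@fps_addA R) (@fps_addC R) (@fps_add0 R) (@fps_addN R).

Section Truncation.
Variable R : fieldType.
Local Notation F := (fps R).

(* [agree n f P]: the series f and the polynomial P share their first n+1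
   coefficients.  Identities of series are proved by checking them on
   polynomial truncations of every order. *)
Definition agree (n : nat) (f : F) (P : {poly R}) := forall i, (i <= n)%N -> f i = P`_i.

Definition trunc (n : nat) (f : F) : {poly R} := \poly_(i < n.+1) f i.

Lemma agree_trunc n f : agree n f (trunc n f).
Proof. by move=> i hi; rewrite coef_poly ltnS hi. Qed.

Lemma agree_truncS n f : agree n f (trunc n.+1 f).
Proof. by move=> i hi; rewrite coef_poly ltnS (leq_trans hi (leqnSn n)). Qed.

Lemma eq_agree (f g : F) : (forall n, exists P, agree n f P /\ agree n g P) -> f = g.
Proof. by move=> h; apply: funext => n; have [P [-> // ->]] := h n. Qed.

Lemma agree_mul n f g P Q : agree n f P -> agree n g Q -> agree n (fps_mul f g) (P * Q).
Proof.
move=> hf hg i hi; rewrite coefM /fps_mul; apply: eq_bigr => -[j hj] _ /=.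
by rewrite hf ?hg //; lia.
Qed.

Lemma agree_add n f g P Q : agree n f P -> agree n g Q -> agree n (f + g) (P + Q).
Proof. by move=> hf hg i hi; rewrite coefD -hf // -hg. Qed.

Lemma agree_const n c : agree n (fps_const c) c%:P.
Proof. by move=> [|i] hi; rewrite coefC. Qed.

Lemma agree_X n : agree n (@fps_X R) 'X.
Proof. by move=> i hi; rewrite coefX /fps_X; case: (i == 1)%N. Qed.

End Truncation.

Section RingStructure.
Variable R : fieldType.
Local Notation F := (fps R).

Lemma fps_mulA : associative (@fps_mul R).
Proof.
move=> f g h; apply: eq_agree => n.
exists (trunc n f * (trunc n g * trunc n h)); split.
  by apply: agree_mul; [|apply: agree_mul]; apply: agree_trunc.
by rewrite mulrA; apply: agree_mul; [apply: agree_mul|]; apply: agree_trunc.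
Qed.

Lemma fps_mulC : commutative (@fps_mul R).
Proof.
move=> f g; apply: eq_agree => n; exists (trunc n f * trunc n g); split.
  by apply: agree_mul; apply: agree_trunc.
by rewrite mulrC; apply: agree_mul; apply: agree_trunc.
Qed.

Lemma fps_mul1 : left_id (fps_const 1) (@fps_mul R).
Proof.
move=> f; apply: eq_agree => n; exists (1%:P * trunc n f); split.
  by apply: agree_mul; [apply: agree_const | apply: agree_trunc].
by rewrite mul1r; apply: agree_trunc.
Qed.

Lemma fps_mulDl : left_distributive (@fps_mul R) (@fps_add R).
Proof.
move=> f g h; apply: eq_agree => n; exists ((trunc n f + trunc n g) * trunc n h); split.
  by apply: agree_mul; [apply: agree_add|]; apply: agree_trunc.
by rewrite mulrDl; apply: agree_add; apply: agree_mul; apply: agree_trunc.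
Qed.

Lemma fps_one_neq0 : (fps_const 1 : F) != fps_const 0.
Proof. by apply/eqP => /(congr1 (fun f : F => f 0%N)) /eqP; rewrite oner_eq0. Qed.

End RingStructure.

HB.instance Definition _ (R : fieldType) :=
  GRing.Zmodule_isComNzRing.Build (fps R)
    (@fps_mulA R) (@fps_mulC R) (@fps_mul1 R) (@fps_mulDl R) (@fps_one_neq0 R).

Section Coefficients.
Variable R : fieldType.
Local Notation F := (fps R).
Local Notation X := (@fps_X R).

Lemma fps_mulE (f g : F) : fps_mul f g = f * g. Proof. by []. Qed.
Lemma fps_subE (f g : F) : fps_sub f g = f - g. Proof. by []. Qed.
Lemma fps_oneE : fps_const 1 = 1 :> F. Proof. by []. Qed.
Lemma fps_zeroE : fps_const 0 = 0 :> F. Proof. by []. Qed.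

Lemma fps_expnE (f : F) k : fps_expn f k = f ^+ k.
Proof. by elim: k => [|k IH] //; rewrite exprS -IH. Qed.

Lemma fcoefD (f g : F) n : (f + g) n = f n + g n. Proof. by []. Qed.
Lemma fcoefN (f : F) n : (- f) n = - f n. Proof. by []. Qed.
Lemma fcoefB (f g : F) n : (f - g) n = f n - g n. Proof. by []. Qed.
Lemma fcoefM (f g : F) n : (f * g) n = \sum_(i < n.+1) f i * g (n - i)%N. Proof. by []. Qed.
Lemma fcoef0 n : (0 : F) n = 0. Proof. by case: n. Qed.
Lemma fcoef1 n : (1 : F) n = (n == 0%N)%:R. Proof. by case: n. Qed.

Lemma fcoefM0 (f g : F) : (f * g) 0%N = f 0%N * g 0%N.
Proof. by rewrite fcoefM big_ord1. Qed.

Lemma fcoefCM c (f : F) n : (fps_const c * f) n = c * f n.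
Proof.
rewrite fcoefM big_ord_recl subn0 big1 ?addr0 // => i _.
by rewrite /fps_const /= mul0r.
Qed.

Lemma fcoef_sum (I : Type) (r : seq I) (P : pred I) (G : I -> F) j :
  (\sum_(m <- r | P m) G m) j = \sum_(m <- r | P m) G m j.
Proof. by elim/big_rec2: _ => [|m a b _ <-]; [exact: fcoef0 | by []]. Qed.

Lemma fps_scaleE c (f : F) : fps_scale c f = fps_const c * f.
Proof. by apply: funext => n; rewrite fcoefCM. Qed.

Lemma fps_constM a b : fps_const (a * b) = fps_const a * fps_const b :> F.
Proof. by apply: funext => n; rewrite fcoefCM; case: n => [|n]; rewrite /= ?mulr0. Qed.

Lemma fps_constD a b : fps_const (a + b) = fps_const a + fps_const b :> F.
Proof. by apply: funext => n; case: n => [|n]; rewrite fcoefD /= ?addr0. Qed.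

Lemma fps_constN a : fps_const (- a) = - fps_const a :> F.
Proof. by apply: funext => n; case: n => [|n]; rewrite fcoefN /= ?oppr0. Qed.

Lemma fps_constX a k : fps_const (a ^+ k) = fps_const a ^+ k :> F.
Proof. by elim: k => [|k IH] //; rewrite !exprS fps_constM IH. Qed.

Lemma fps_XM (g : F) : X * g = fps_mulX g.
Proof.
apply: funext => -[|n]; first by rewrite fcoefM0 /fps_X /= mul0r.
rewrite fcoefM big_ord_recl big_ord_recl big1 /=.
  by rewrite /fps_X /bump /= mul0r add0r mul1r addr0 subSS subn0.
by move=> -[i hi] _; rewrite /fps_X /bump /= mul0r.
Qed.

Lemma fps_XnM (g : F) m i : (X ^+ m * g) (i + m)%N = g i.
Proof.
elim: m g i => [|m IH] g i; first by rewrite expr0 mul1r addn0.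
by rewrite exprSr -mulrA addnS -addSn IH fps_XM.
Qed.

Lemma fps_XnM_low (g : F) m i : (i < m)%N -> (X ^+ m * g) i = 0.
Proof.
elim: m i g => [|m IH] [|i] g //= hi; rewrite exprS -mulrA fps_XM //.
by rewrite /fps_mulX IH.
Qed.

Lemma fps_Xn_coef k i : (X ^+ k) i = (i == k)%:R.
Proof.
have [hik|hki] := ltnP i k.
  by rewrite -[X ^+ k]mulr1 fps_XnM_low // (_ : (i == k) = false) //; apply/eqP; lia.
rewrite -(subnK hki) -[X ^+ k]mulr1 fps_XnM fcoef1.
by congr (_ %:R); apply/eqP/eqP; lia.
Qed.

Lemma fps_X_inj (f g : F) : X * f = X * g -> f = g.
Proof.
by move=> h; apply: funext => n; have := congr1 (fun k : F => k n.+1) h; rewrite !fps_XM.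
Qed.

Lemma fps_mulX_divX (h : F) : h 0%N = 0 -> X * fps_divX h = h.
Proof. by move=> h0; rewrite fps_XM; apply: funext => -[|n]. Qed.

Lemma fcoefM_low (A f g : F) n :
  (forall j, (j <= n)%N -> f j = g j) -> (A * f) n = (A * g) n.
Proof. by move=> h; rewrite !fcoefM; apply: eq_bigr => -[i hi] _ /=; rewrite h //; lia. Qed.

Lemma fcoefX_low (f : F) k i : f 0%N = 0 -> (i < k)%N -> (f ^+ k) i = 0.
Proof.
move=> f0; elim: k i => [|k IH] i //= hi.
rewrite exprS fcoefM big1 // => -[[|j] hj] _ /=; first by rewrite f0 mul0r.
by rewrite IH ?mulr0 //; lia.
Qed.

End Coefficients.

Lemma sum_widen (R : zmodType) (G : nat -> R) a b : (a <= b)%N ->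
  (forall k, (a <= k)%N -> (k < b)%N -> G k = 0) ->
  \sum_(k < a) G k = \sum_(k < b) G k.
Proof.
move=> hab H; rewrite -!(big_mkord xpredT) (@big_cat_nat _ _ _ a 0 b _ _ (leq0n a) hab) /=.
by rewrite [X in _ = _ + X]big_nat_cond [X in _ = _ + X]big1 ?addr0 // => k /andP [/andP[h1 h2] _]; apply: H.
Qed.

Section Composition.
Variable R : fieldType.
Local Notation F := (fps R).
Local Notation X := (@fps_X R).

Lemma agree_exp n (f : F) P k : agree n f P -> agree n (f ^+ k) (P ^+ k).
Proof.
move=> h; elim: k => [|k IH]; first by rewrite !expr0; apply: agree_const.
by rewrite !exprS; apply: agree_mul.
Qed.

Lemma agree_comp n (f u : F) P U : agree n f P -> agree n u U -> u 0%N = 0 ->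
  agree n (fps_comp f u) (P \Po U).
Proof.
move=> hf hu u0 i hi; rewrite coef_comp_poly /fps_comp.
have U0 : U`_0 = 0 by rewrite -hu.
have Upow_low k : (i < k)%N -> (U ^+ k)`_i = 0.
  by move=> hik; rewrite -(agree_exp k hu) // fcoefX_low.
set G := fun k => P`_k * (U ^+ k)`_i.
have -> : \sum_(k < i.+1) f k * fps_expn u k i = \sum_(k < i.+1) G k.
  apply: eq_bigr => -[k hk] _ /=; rewrite fps_expnE hf; last by lia.
  by rewrite (agree_exp k hu).
rewrite (@sum_widen _ G _ (maxn i.+1 (size P))) ?leq_maxl //; last first.
  by move=> k hk _; rewrite /G Upow_low ?mulr0.
rewrite [RHS](@sum_widen _ G _ (maxn i.+1 (size P))) ?leq_maxr //.
by move=> k hk _; rewrite /G nth_default ?mul0r.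
Qed.

Lemma fps_comp_coef0 (f u : F) : fps_comp f u 0%N = f 0%N.
Proof. by rewrite /fps_comp big_ord1 /= mulr1. Qed.

Variable u : F.
Hypothesis u0 : u 0%N = 0.

Lemma fps_compM (f g : F) : fps_comp (f * g) u = fps_comp f u * fps_comp g u.
Proof.
apply: eq_agree => n; exists ((trunc n f \Po trunc n u) * (trunc n g \Po trunc n u)).
split; last by apply: agree_mul; apply: agree_comp => //; apply: agree_trunc.
rewrite -comp_polyM; apply: agree_comp => //; last exact: agree_trunc.
by apply: agree_mul; apply: agree_trunc.
Qed.

Lemma fps_compD (f g : F) : fps_comp (f + g) u = fps_comp f u + fps_comp g u.
Proof.
apply: eq_agree => n; exists ((trunc n f \Po trunc n u) + (trunc n g \Po trunc n u)).
split; last by apply: agree_add; apply: agree_comp => //; apply: agree_trunc.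
rewrite -comp_polyD; apply: agree_comp => //; last exact: agree_trunc.
by apply: agree_add; apply: agree_trunc.
Qed.

Lemma fps_compC c : fps_comp (fps_const c) u = fps_const c.
Proof.
apply: eq_agree => n; exists (c%:P \Po trunc n u); split.
  by apply: agree_comp => //; [apply: agree_const | apply: agree_trunc].
by rewrite comp_polyC; apply: agree_const.
Qed.

Lemma fps_comp1 : fps_comp 1 u = 1.
Proof. exact: fps_compC. Qed.

Lemma fps_compX : fps_comp X u = u.
Proof.
apply: eq_agree => n; exists ('X \Po trunc n u); split.
  by apply: agree_comp => //; [apply: agree_X | apply: agree_trunc].
by rewrite comp_polyX; apply: agree_trunc.
Qed.

Lemma fps_compB (f g : F) : fps_comp (f - g) u = fps_comp f u - fps_comp g u.
Proof.
apply/eqP; rewrite -(inj_eq (addrI (fps_comp g u))) addrC -fps_compD subrK.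
by rewrite addrC subrK.
Qed.

Lemma fps_compXn (f : F) k : fps_comp (f ^+ k) u = fps_comp f u ^+ k.
Proof. by elim: k => [|k IH]; rewrite ?fps_comp1 // !exprS fps_compM IH. Qed.

End Composition.

Lemma fps_comp_id (R : fieldType) (f : fps R) : fps_comp f (@fps_X R) = f.
Proof.
apply: funext => n; rewrite /fps_comp (bigD1 ord_max) //= big1 ?addr0 => [|[k hk] hne].
  by rewrite fps_expnE fps_Xn_coef eqxx mulr1.
rewrite fps_expnE fps_Xn_coef (_ : (n == k) = false) ?mulr0 //.
by apply: contraNF hne => /eqP e; apply/eqP/val_inj; rewrite /= e.
Qed.

Section Derivative.
Variable R : fieldType.
Local Notation F := (fps R).
Local Notation X := (@fps_X R).

Definition fD (f : F) : F := fun n => f n.+1 *+ n.+1.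

(* Leibniz, power and chain rules follow from the polynomial ones. *)
Lemma agree_D n f P : agree n.+1 f P -> agree n (fD f) P^`().
Proof. by move=> h i hi; rewrite coef_deriv /fD h. Qed.

Lemma fD_add (f g : F) : fD (f + g) = fD f + fD g.
Proof. by apply: funext => n; rewrite /fD fcoefD mulrnDl. Qed.

Lemma fD_opp (f : F) : fD (- f) = - fD f.
Proof. by apply: funext => n; rewrite /fD fcoefN mulNrn. Qed.

Lemma fD_const c : fD (fps_const c) = 0.
Proof. by apply: funext => n; rewrite /fD /= mul0rn fcoef0. Qed.

Lemma fD_X : fD X = 1.
Proof. by apply: funext => -[|n]; rewrite /fD fcoef1 /fps_X /= ?mul0rn. Qed.

Lemma fD_mul (f g : F) : fD (f * g) = fD f * g + f * fD g.
Proof.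
apply: eq_agree => n; exists ((trunc n.+1 f * trunc n.+1 g)^`()); split.
  by apply: agree_D; apply: agree_mul; apply: agree_trunc.
rewrite derivM; apply: agree_add; apply: agree_mul;
  by [apply: agree_D; apply: agree_trunc | apply: agree_truncS].
Qed.

Lemma fD_exp (f : F) k : fD (f ^+ k.+1) = fps_const (k.+1)%:R * f ^+ k * fD f.
Proof.
elim: k => [|k IH]; first by rewrite expr1 expr0 mulr1 fps_oneE mul1r.
by rewrite exprS fD_mul IH [in RHS]mulrS fps_constD fps_oneE exprS; ring.
Qed.

Lemma fD_comp (f u : F) : u 0%N = 0 -> fD (fps_comp f u) = fps_comp (fD f) u * fD u.
Proof.
move=> u0; apply: eq_agree => n; exists ((trunc n.+1 f \Po trunc n.+1 u)^`()); split.
  by apply: agree_D; apply: agree_comp => //; apply: agree_trunc.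
rewrite deriv_comp; apply: agree_mul; last by apply: agree_D; apply: agree_trunc.
by apply: agree_comp => //; [apply: agree_D; apply: agree_trunc | apply: agree_truncS].
Qed.

End Derivative.

Section Inverse.
Variable R : fieldType.
Local Notation F := (fps R).
Local Notation X := (@fps_X R).

Definition fps_geom : F := fun _ => 1.

Lemma fps_geomE : (1 - X) * fps_geom = 1.
Proof.
apply: funext => -[|n]; first by rewrite fcoefM0 fcoefB /fps_X /fps_geom /= subr0 mulr1.
rewrite fcoefM big_ord_recl big_ord_recl big1 /=.
  by rewrite /fps_geom fcoef1 !fcoefB !fcoef1 /fps_X /= !mulr1 subr0 sub0r addr0 subrr.
by move=> i _; rewrite fcoefB fcoef1 /fps_X /= subrr mul0r.
Qed.

Lemma fps_invK (h : F) : h 0%N != 0 -> fps_inv h * h = 1.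
Proof.
move=> h0; rewrite /fps_inv fps_scaleE fps_subE.
set v := 1 - fps_scale _ h.
have v0 : v 0%N = 0 by rewrite /v fcoefB fcoef1 /fps_scale /= mulVf // subrr.
have := congr1 (fun g => fps_comp g v) fps_geomE.
rewrite fps_compM // fps_compB // fps_comp1 // fps_compX // -/fps_geom => H.
have Ev : 1 - v = fps_const (h 0%N)^-1 * h by rewrite /v fps_scaleE; ring.
by rewrite -[RHS]H Ev; ring.
Qed.

(* The unit-ring structure: [fps_invr] extends [fps_inv] to non-units. *)
Definition fps_unit : {pred F} := fun h => h 0%N != 0.
Definition fps_invr (h : F) : F := if h 0%N != 0 then fps_inv h else h.

Lemma fps_mulVr : {in fps_unit, left_inverse 1 fps_invr *%R}.
Proof. by move=> h hu; rewrite /fps_invr (hu : h 0%N != 0) fps_invK. Qed.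

Lemma fps_unitPl (x y : F) : y * x = 1 -> fps_unit x.
Proof.
move=> /(congr1 (fun f : F => f 0%N)); rewrite fcoefM0 fcoef1 /= => H.
by apply/eqP => x0; move: H; rewrite x0 mulr0 => /eqP; rewrite eq_sym oner_eq0.
Qed.

Lemma fps_invr_out : {in [predC fps_unit], fps_invr =1 id}.
Proof. by move=> h hn; rewrite /fps_invr (negbTE (hn : ~~ (h 0%N != 0))). Qed.

End Inverse.

HB.instance Definition _ (R : fieldType) :=
  GRing.ComNzRing_hasMulInverse.Build (fps R) (@fps_mulVr R) (@fps_unitPl R) (@fps_invr_out R).

Section Units.
Variable R : fieldType.
Local Notation F := (fps R).

Lemma fps_unitE (h : F) : (h \is a GRing.unit) = (h 0%N != 0). Proof. by []. Qed.

Lemma fps_invE (h : F) : h 0%N != 0 -> fps_inv h = h^-1.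
Proof. by move=> h0; rewrite /GRing.inv /= /fps_invr h0. Qed.

Lemma fcoefV0 (h : F) : (h^-1) 0%N = (h 0%N)^-1.
Proof.
have [h0|h0] := eqVneq (h 0%N) 0; first by rewrite invr_out ?fps_unitE ?h0 ?negbK ?invr0.
have := congr1 (fun f : F => f 0%N) (mulVr (h0 : h \is a GRing.unit)).
by rewrite fcoefM0 fcoef1 /= => /(canRL (mulfK h0)); rewrite mul1r.
Qed.

Lemma fps_compV (g u : F) : u 0%N = 0 -> fps_comp g^-1 u = (fps_comp g u)^-1.
Proof.
move=> u0; have [g0|g0] := eqVneq (g 0%N) 0.
  by rewrite !invr_out ?fps_unitE ?fps_comp_coef0 ?g0 ?negbK.
by apply/esym/mulr1_eq; rewrite -fps_compM // mulrV // fps_comp1.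
Qed.

Lemma fD_inv (h : F) : h 0%N != 0 -> fD h^-1 = - (h^-1 ^+ 2) * fD h.
Proof.
move=> hu; rewrite -fps_unitE in hu.
have := congr1 (@fD R) (mulrV hu); rewrite fD_mul -fps_oneE fD_const => H.
have : h * fD h^-1 = - fD h * h^-1 by apply/eqP; rewrite -subr_eq0 mulNr opprK addrC H.
move/(congr1 (fun g => h^-1 * g)); rewrite mulrA mulVr // mul1r => ->.
by rewrite expr2; ring.
Qed.

End Units.

Section ExpLog.
Variable R : numFieldType.
Local Notation F := (fps R).
Local Notation X := (@fps_X R).

Lemma fact_neq0 n : (n`!)%:R != 0 :> R.
Proof. by rewrite pnatr_eq0 -lt0n fact_gt0. Qed.

Lemma fD_eq0 (f : F) : fD f = 0 -> f = fps_const (f 0%N).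
Proof.
move=> h; apply: funext => -[|n] //=.
by have /eqP := congr1 (fun g : F => g n) h; rewrite /fD fcoef0 mulrn_eq0 /= => /eqP.
Qed.

Lemma expS_coef0 c : fps_expS c 0%N = 1 :> R.
Proof. by rewrite /fps_expS expr0 fact0 divr1. Qed.

Lemma fD_expS c : fD (fps_expS c) = fps_const c * fps_expS c :> F.
Proof.
apply: funext => n; rewrite /fD fcoefCM /fps_expS exprS factS natrM -mulr_natr.
have h1 := fact_neq0 n; have h2 : (n.+1)%:R != 0 :> R by rewrite pnatr_eq0.
by field; rewrite h1 addrC natr1 h2.
Qed.

Lemma exp_coef0 (h : F) : fps_exp h 0%N = 1.
Proof. by rewrite /fps_exp fps_comp_coef0 expS_coef0. Qed.

Lemma fD_exp_comp (h : F) : h 0%N = 0 -> fD (fps_exp h) = fps_exp h * fD h.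
Proof. by move=> h0; rewrite /fps_exp fD_comp // fD_expS fps_oneE mul1r. Qed.

(* exp(-h) = 1/exp(h): the product has zero derivative and constant term 1. *)
Lemma exp_opp (h : F) : h 0%N = 0 -> fps_exp (- h) = (fps_exp h)^-1.
Proof.
move=> h0; have hN : (- h) 0%N = 0 by rewrite fcoefN h0 oppr0.
apply/esym/mulr1_eq; rewrite mulrC.
rewrite (fD_eq0 (f := fps_exp (- h) * fps_exp h)) ?fcoefM0 ?exp_coef0 ?mulr1 //.
by rewrite fD_mul !fD_exp_comp // fD_opp; ring.
Qed.

(* The derivative of log(1+t) is the alternating series 1/(1+t). *)
Definition fps_alt : F := fun n => (-1) ^+ n.

Lemma fD_logS : fD (@fps_logS R) = fps_alt.
Proof.
apply: funext => n; rewrite /fD /fps_logS /fps_alt -mulr_natr.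
have h2 : (n.+1)%:R != 0 :> R by rewrite pnatr_eq0.
by rewrite !exprS; field; rewrite addrC natr1.
Qed.

Lemma fps_altE : (1 + X) * fps_alt = 1.
Proof.
apply: funext => -[|n]; first by rewrite fcoefM0 fcoefD fcoef1 /fps_X /fps_alt /= addr0 mulr1.
rewrite fcoefM big_ord_recl big_ord_recl big1 /=.
  rewrite /fps_alt fcoef1 !fcoefD !fcoef1 /fps_X /bump /= addr0 add0r !mul1r subn0 addr0.
  by rewrite subSS subn0 exprS mulN1r addrC subrr.
by move=> i _; rewrite fcoefD fcoef1 /fps_X /= addr0 mul0r.
Qed.

Lemma log_coef0 (h : F) : fps_log h 0%N = 0.
Proof. by rewrite /fps_log fps_comp_coef0. Qed.

Lemma fD_log (h : F) : h 0%N = 1 -> fD (fps_log h) = h^-1 * fD h.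
Proof.
move=> h1; have v0 : (h - 1) 0%N = 0 by rewrite fcoefB h1 fcoef1 subrr.
rewrite /fps_log fps_subE fps_oneE fD_comp // fD_logS fD_add fD_opp (fD_const 1).
rewrite subr0; congr (_ * _); apply/esym/mulr1_eq.
have := congr1 (fun g => fps_comp g (h - 1)) fps_altE.
by rewrite fps_compM // fps_compD // fps_comp1 // fps_compX // [1 + _]addrC subrK.
Qed.

Lemma log_inv (h : F) : h 0%N = 1 -> fps_log h^-1 = - fps_log h.
Proof.
move=> h1; have hu : h 0%N != 0 by rewrite h1 oner_eq0.
have hv1 : h^-1 0%N = 1 by rewrite fcoefV0 h1 invr1.
apply/eqP; rewrite -addr_eq0; apply/eqP.
rewrite (fD_eq0 (f := fps_log h^-1 + fps_log h)).
  by rewrite fcoefD !log_coef0 addr0 fps_zeroE.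
rewrite fD_add !fD_log // fD_inv // invrK expr2 mulrA mulrN mulrA.
by rewrite mulrV // mul1r; ring.
Qed.

Lemma pow_inv (h : F) a : h 0%N = 1 -> fps_pow h^-1 a = (fps_pow h a)^-1.
Proof.
move=> h1; rewrite /fps_pow !fps_scaleE log_inv // mulrN exp_opp //.
by rewrite fcoefCM log_coef0 mulr0.
Qed.

Lemma pow_coef0 (h : F) a : fps_pow h a 0%N = 1.
Proof. exact: exp_coef0. Qed.

End ExpLog.

(* Lagrange inversion, through the residue calculus of [t^(K-1)]. *)
Section LagrangeInversion.
Variable R : numFieldType.
Local Notation F := (fps R).
Local Notation X := (@fps_X R).

(* Residue of w^(-J) d(t w)/dt: the coefficient of t^(J-1) is [J = 1].
   For J > 1 the series is, up to t * (a derivative), itself a derivative. *)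
Lemma residue_power (w : F) J : w 0%N != 0 -> (0 < J)%N ->
  ((w^-1) ^+ J * fD (X * w)) J.-1 = (J == 1%N)%:R.
Proof.
move=> w0; rewrite -fps_unitE in w0; rewrite fD_mul fD_X mul1r.
case: J => [|J] // _ /=.
have -> : w^-1 ^+ J.+1 * (w + X * fD w) = w^-1 ^+ J + X * (w^-1 ^+ J.+1 * fD w).
  by rewrite exprSr mulrDr -(mulrA _ w^-1 w) mulVr // mulr1; congr (_ + _); ring.
case: J => [|J]; first by rewrite fcoefD expr0 fcoef1 fps_XM /= addr0.
rewrite fcoefD fps_XM /=.
have DwJ : fD (w^-1 ^+ J.+1) = - fps_const (J.+1)%:R * (w^-1 ^+ J.+2 * fD w).
  by rewrite fD_exp fD_inv // expr2 !exprS; ring.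
have := congr1 (fun k : F => k J) DwJ; rewrite /fD -fps_constN fcoefCM => H.
have hJ : (J.+1)%:R != 0 :> R by rewrite pnatr_eq0.
have -> : (w^-1 ^+ J.+2 * fD w) J = - (w^-1 ^+ J.+1) J.+1.
  by apply: (mulfI hJ); rewrite mulrN [in RHS]mulr_natl H mulNr opprK.
by rewrite subrr.
Qed.

(* Change of variables t -> t w(t) in a residue:
   [t^(K-1)] w^(-K) Q(t w) (t w)' = [t^(K-1)] Q. *)
Lemma residue_change (w Q : F) K : w 0%N != 0 -> (0 < K)%N ->
  ((w^-1) ^+ K * fps_comp Q (X * w) * fD (X * w)) K.-1 = Q K.-1.
Proof.
move=> w0 hK; set u := X * w.
have u0 : u 0%N = 0 by rewrite /u fps_XM.
have wu : w \is a GRing.unit by [].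
(* Only the terms Q_m u^m with m < K contribute. *)
rewrite mulrAC (@fcoefM_low _ _ _ (\sum_(m < K) fps_const (Q m) * u ^+ m)); last first.
  move=> j hj; rewrite fcoef_sum /fps_comp.
  under [RHS]eq_bigr do rewrite fcoefCM.
  rewrite (eq_bigr (fun k : 'I_j.+1 => Q k * (u ^+ k) j)); last by move=> k _; rewrite fps_expnE.
  apply: (@sum_widen _ (fun m => Q m * (u ^+ m) j) j.+1 K); first by lia.
  by move=> m hm _; rewrite fcoefX_low ?mulr0.
have term (m : 'I_K) : ((w^-1 ^+ K * fD u) * (fps_const (Q m) * u ^+ m)) K.-1
   = Q m * (m == K.-1 :> nat)%:R.
  have hm := ltn_ord m.
  have -> : (w^-1 ^+ K * fD u) * (fps_const (Q m) * u ^+ m)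
     = fps_const (Q m) * (X ^+ m * (w^-1 ^+ (K - m) * fD u)).
    have -> : w^-1 ^+ K = w^-1 ^+ (K - m) * w^-1 ^+ m by rewrite -exprD subnK // ltnW.
    have E : w^-1 ^+ m * w ^+ m = 1 by rewrite -exprMn mulVr // expr1n.
    by rewrite /u exprMn -[RHS]mulr1 -E; ring.
  rewrite fcoefCM (_ : K.-1 = ((K - m).-1 + m)%N); last by lia.
  by rewrite fps_XnM residue_power //; [congr (_ * _%:R); apply/eqP/eqP | ]; lia.
rewrite mulr_sumr fcoef_sum (eq_bigr _ (fun m _ => term m)).
rewrite -(prednK hK) big_ord_recr /= eqxx mulr1 big1 ?add0r // => -[m hm] _ /=.
by rewrite (_ : (m == K.-1) = false) ?mulr0 //; apply/eqP; lia.
Qed.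

Variables (u psi : F).
Hypotheses (u0 : u 0%N = 0) (psi0 : psi 0%N != 0).
Hypothesis u_inv : fps_comp (X * psi) u = X.

Lemma lagrange_inversion n k : (1 <= k)%N -> (k <= n)%N ->
  n%:R * (u ^+ k) n = k%:R * ((psi^-1) ^+ n) (n - k)%N.
Proof.
move=> hk hkn; set w := fps_divX u.
have uw : u = X * w by rewrite fps_mulX_divX.
have w_psi : w * fps_comp psi u = 1.
  by apply: fps_X_inj; rewrite mulr1 mulrA -uw -[RHS]u_inv fps_compM // fps_compX.
have w0 : w 0%N != 0.
  apply/eqP => w0; have := congr1 (fun f : F => f 0%N) w_psi.
  by rewrite fcoefM0 w0 mul0r fcoef1 => /eqP; rewrite eq_sym oner_eq0.
have wu : w \is a GRing.unit by [].
have psi_u : fps_comp (psi^-1 ^+ n) u = w ^+ n.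
  by rewrite fps_compXn // fps_compV //; congr (_ ^+ _); apply: mulr1_eq; rewrite mulrC.
(* n [t^n] u^k = [t^(n-1)] (u^k)' = k [t^(n-1)] u^(k-1) u' *)
have n0 : (0 < n)%N by apply: leq_trans hkn.
have E1 : (fD (u ^+ k)) n.-1 = (u ^+ k) n *+ n by rewrite /fD prednK.
rewrite mulr_natl -E1; case: k hk hkn {E1} => [|k] // _ hkn.
rewrite fD_exp -mulrA fcoefCM; congr (_ * _).
(* u^k = t^k w^k and w^k = w^(-(n-k)) (psi^(-n) o u) *)
have -> : n.-1 = ((n - k.+1) + k)%N by lia.
rewrite {1}uw exprMn -mulrA fps_XnM.
have -> : w ^+ k = w^-1 ^+ (n - k) * w ^+ n.
  have -> : w ^+ n = w ^+ (n - k) * w ^+ k by rewrite -exprD subnK // ltnW.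
  by rewrite mulrA -exprMn mulVr // expr1n mul1r.
rewrite -psi_u uw (_ : (n - k.+1)%N = (n - k).-1); last by lia.
by apply: residue_change => //; lia.
Qed.

Lemma lagrange_comp (Q : F) n : (0 < n)%N ->
  fps_comp Q u n = \sum_(k < n) (k.+1)%:R / n%:R * Q k.+1 * ((psi^-1) ^+ n) (n.-1 - k)%N.
Proof.
move=> hn; have n0 : n%:R != 0 :> R by rewrite pnatr_eq0 -lt0n.
rewrite /fps_comp big_ord_recl fps_expnE expr0 fcoef1 (_ : (n == 0)%N = false); last by lia.
rewrite mulr0 add0r; apply: eq_bigr => -[k hk] _; rewrite fps_expnE /=.
have -> : (u ^+ k.+1) n = (k.+1)%:R / n%:R * ((psi^-1) ^+ n) (n - k.+1)%N.
  by apply: (mulfI n0); rewrite lagrange_inversion //; field.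
by rewrite (_ : (n - k.+1 = n.-1 - k)%N); [ring | lia].
Qed.

End LagrangeInversion.

Section ExponentialSeries.
Variable R : numFieldType.
Local Notation F := (fps R).

Lemma binomial_fact m k : (k <= m)%N ->
  'C(m, k)%:R = m`!%:R / (k`!%:R * (m - k)`!%:R) :> R.
Proof.
move=> hk; rewrite -(bin_fact hk) !natrM mulfK //.
by rewrite mulf_neq0 // fact_neq0.
Qed.

(* e^{ut} e^{vt} = e^{(u+v)t}, by the binomial theorem. *)
Lemma expS_add u v : fps_expS u * fps_expS v = fps_expS (u + v) :> F.
Proof.
apply: funext => m; rewrite fcoefM /fps_expS addrC exprDn mulr_suml.
apply: eq_bigr => -[i hi] _ /=; rewrite ltnS in hi.
rewrite -[_ *+ 'C(m, i)]mulr_natr (binomial_fact hi).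
have h1 := fact_neq0 R i; have h2 := fact_neq0 R (m - i); have h3 := fact_neq0 R m.
by field; rewrite h1 h2 h3.
Qed.

Lemma expS0 : fps_expS 0 = 1 :> F.
Proof.
apply: funext => -[|m]; rewrite /fps_expS fcoef1 /=; first by rewrite expr0 fact0 divr1.
by rewrite expr0n /= mul0r.
Qed.

Lemma expS_inv u : (fps_expS u)^-1 = fps_expS (- u) :> F.
Proof. by apply: mulr1_eq; rewrite expS_add subrr expS0. Qed.

Lemma expS_expn u k : fps_expS u ^+ k = fps_expS (k%:R * u) :> F.
Proof.
elim: k => [|k IH]; first by rewrite expr0 mul0r expS0.
by rewrite exprS IH expS_add mulrSr mulrDl mul1r addrC.
Qed.

Lemma exp_scale_comp y (u : F) : fps_exp (fps_scale y u) = fps_comp (fps_expS y) u.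
Proof.
apply: funext => n; apply: eq_bigr => k _.
rewrite !fps_expnE fps_scaleE exprMn -fps_constX fcoefCM /fps_expS expr1n.
by rewrite mul1r; ring.
Qed.

Definition fps_dilate (c : R) (f : F) : F := fun i => c ^+ i * f i.

Lemma fps_dilateM c (f g : F) : fps_dilate c (f * g) = fps_dilate c f * fps_dilate c g.
Proof.
apply: funext => m; rewrite /fps_dilate !fcoefM mulr_sumr.
apply: eq_bigr => -[i hi] _ /=; rewrite ltnS in hi.
by rewrite -{1}(subnKC hi) exprD; ring.
Qed.

Lemma fps_dilateX c (f : F) k : fps_dilate c (f ^+ k) = (fps_dilate c f) ^+ k.
Proof.
elim: k => [|k IH]; last by rewrite !exprS fps_dilateM IH.
by apply: funext => -[|m]; rewrite /fps_dilate !expr0 fcoef1 /= ?expr0 ?mulr1 ?mulr0.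
Qed.

Lemma fps_dilate_expS1 c : fps_dilate c (fps_expS 1 - 1) = fps_expS c - 1.
Proof.
apply: funext => m; rewrite /fps_dilate !fcoefB !fcoef1 /fps_expS expr1n.
by case: m => [|m] /=; rewrite ?expr0 ?mulr1 ?subr0 ?mul1r // mulrA mulr1.
Qed.

Lemma stirling_series c n l :
  (fps_divX (fps_sub (fps_expS c) (fps_const 1)) ^+ n) l
  = c ^+ (l + n) * (n`!%:R / (l + n)`!%:R * stirling2 R (l + n) n) :> R.
Proof.
set D := fps_divX _.
have XD : fps_X R * D = fps_dilate c (fps_expS 1 - 1).
  rewrite fps_dilate_expS1 /D fps_subE fps_oneE fps_mulX_divX //.
  by rewrite fcoefB expS_coef0 fcoef1 subrr.
have := congr1 (fun f : F => (f ^+ n) (l + n)%N) XD.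
rewrite /= exprMn fps_XnM -fps_dilateX /fps_dilate => ->; congr (_ * _).
rewrite /stirling2 fps_expnE fps_subE fps_oneE.
have h1 := fact_neq0 R n; have h2 := fact_neq0 R (l + n).
by field; rewrite h1 h2.
Qed.

End ExponentialSeries.

Section ShefferSequences.
Variable R : numFieldType.
Local Notation F := (fps R).
Local Notation X := (@fps_X R).

(* The Appell sequence of g:  sum_m A_m(y) t^m / m! = e^{yt} / g(t). *)
Definition appell (g : F) (y : R) (m : nat) : R := m`!%:R * (g^-1 * fps_expS y) m.

Lemma sheffer_lagrange (g psi : F) (S : nat -> {poly R}) n y :
  g 0%N != 0 -> psi 0%N != 0 -> is_sheffer g (X * psi) S -> (0 < n)%N ->
  (S n).[y] = \sum_(k < n)
     (n.-1)`!%:R / k`!%:R * ((psi^-1) ^+ n) (n.-1 - k)%N * appell g y k.+1.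
Proof.
move=> g0 psi0 [fb [fb0 [fb_inv hS]]] hn.
have fb_inv' : fps_comp (X * psi) fb = X by apply: funext.
have Sn : (S n).[y] = n`!%:R * fps_comp (g^-1 * fps_expS y) fb n.
  have := hS y n; rewrite fps_invE ?fps_comp_coef0 // -fps_compV // exp_scale_comp.
  by rewrite fps_mulE -fps_compM // => <-; rewrite mulrC divfK // fact_neq0.
rewrite Sn (lagrange_comp fb0 psi0 fb_inv' _ hn) mulr_sumr.
apply: eq_bigr => -[k hk] _ /=; rewrite /appell.
set P := (psi^-1 ^+ n) _; set Q := (g^-1 * fps_expS y) k.+1.
rewrite -(prednK hn) !factS !natrM.
by field; rewrite fact_neq0 nat1r pnatr_eq0.
Qed.

Lemma eT_coef0 : fps_eT R 0%N = 1.
Proof. by rewrite /fps_eT /fps_divX /fps_sub /fps_expS /= subr0 expr1n divr1. Qed.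

Lemma bernoulli_appell a x m : bernoulli_ord a x m = appell (fps_pow (fps_eT R) a) x m.
Proof.
rewrite /bernoulli_ord /appell fps_invE ?eT_coef0 ?oner_eq0 // pow_inv ?eT_coef0 //.
by rewrite exp_scale_comp fps_comp_id.
Qed.

End ShefferSequences.

(* Both sides sum G over the triples (k, l, j) with k + l + j = n - 1. *)
Lemma sum_compositions (R : zmodType) n (G : nat -> nat -> nat -> R) :
  \sum_(k < n) \sum_(l < n - k) G k l (n.-1 - k - l)%N
  = \sum_(l < n) \sum_(j < n - l) G (n.-1 - l - j)%N l j.
Proof.
have pad (H : nat -> R) (i : nat) : (i < n)%N ->
    \sum_(j < n - i) H j = \sum_(j < n) (if (i + j < n)%N then H j else 0).
  move=> hi; rewrite (eq_bigr (fun j : 'I_(n - i) => if (i + j < n)%N then H j else 0)).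
    apply: (@sum_widen _ (fun j => if (i + j < n)%N then H j else 0)); first by lia.
    by move=> j hj _; rewrite ifF //; lia.
  by move=> -[j hj] _ /=; rewrite ifT //; lia.
transitivity (\sum_(l < n) \sum_(k < n - l) G k l (n.-1 - k - l)%N).
  rewrite (eq_bigr _ (fun (k : 'I_n) _ => pad (fun l => G k l (n.-1 - k - l)%N) k (ltn_ord k))).
  rewrite exchange_big /=.
  apply: eq_bigr => -[l hl] _; rewrite (pad (fun k => G k l (n.-1 - k - l)%N) l hl).
  by apply: eq_bigr => -[k hk] _ /=; rewrite addnC.
apply: eq_bigr => -[l hl] _ /=.
rewrite -(big_mkord xpredT (fun k => G k l (n.-1 - k - l)%N)) big_rev_mkord subn0.
by apply: eq_bigr => -[j hj] _ /=; congr G; lia.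
Qed.

Lemma binomial_weight (R : numFieldType) n l j : (l + j < n)%N ->
  'C(n.-1, l)%:R / 'C(l + n, l)%:R * 'C(n.-1 - l, j)%:R
  = (n.-1)`!%:R / (n.-1 - l - j)`!%:R * (n`!%:R / (l + n)`!%:R) / j`!%:R :> R.
Proof.
move=> hljn; have [r ->] : exists r, n = (l + j + r).+1 by exists (n - (l + j).+1)%N; lia.
rewrite /= !binomial_fact; try lia.
have -> : (l + j + r - l = j + r)%N by lia.
have -> : (l + (l + j + r).+1 - l = (l + j + r).+1)%N by lia.
have -> : (j + r - j = r)%N by lia.
rewrite factS natrM.
by field; rewrite !fact_neq0 -!natrD nat1r pnatr_eq0.
Qed.

Theorem theorem3 (R : numFieldType) (a b c : R) (S : nat -> {poly R}) :
  c != 0 ->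
  is_sheffer (fps_pow (fps_eT R) a)
    (fps_mulX (fps_mul (fps_expS b)
       (fps_inv (fps_divX (fps_sub (fps_expS c) (fps_const 1)))))) S ->
  forall (n : nat) (x : R), (1 <= n)%N ->
  (S n).[x] =
    \sum_(l < n) \sum_(j < n - l)
      ('C(n.-1, l)%:R / 'C(l + n, l)%:R * 'C(n.-1 - l, j)%:R
       * stirling2 R (l + n) n * c ^+ (n + l) * (- (n%:R * b)) ^+ j
       * bernoulli_ord a x (n - l - j)).
Proof.
move=> c0 hS n x hn.
(* f = t psi(t) with psi = e^{bt} / D(t) and D = (e^{ct}-1)/t, D(0) = c *)
set D := fps_divX _ in hS; set psi := fps_expS b * D^-1.
have D0 : D 0%N != 0 by rewrite /D /fps_divX /fps_sub /fps_expS /= subr0 expr1 divr1.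
have psi0 : psi 0%N != 0 by rewrite /psi fcoefM0 expS_coef0 mul1r fcoefV0 invr_eq0.
have g0 : fps_pow (fps_eT R) a 0%N != 0 by rewrite pow_coef0 oner_eq0.
rewrite fps_invE // -fps_XM in hS.
have psi_pow : psi^-1 ^+ n = D ^+ n * fps_expS (- (n%:R * b)).
  by rewrite invrM ?unitrV ?fps_unitE ?expS_coef0 ?oner_eq0 // invrK expS_inv
             exprMn expS_expn mulrN mulrC.
rewrite (sheffer_lagrange x g0 psi0 hS hn) psi_pow.
pose T k l j := (n.-1)`!%:R / k`!%:R * ((D ^+ n) l * fps_expS (- (n%:R * b)) j)
                * appell (fps_pow (fps_eT R) a) x k.+1.
transitivity (\sum_(k < n) \sum_(l < n - k) T k l (n.-1 - k - l)%N).
  apply: eq_bigr => -[k hk] _; rewrite fcoefM (_ : (n.-1 - k).+1 = n - k)%N; last by lia.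
  by rewrite big_distrr big_distrl.
rewrite sum_compositions; apply: eq_bigr => -[l hl] _; apply: eq_bigr => -[j /= hj] _ /=.
rewrite /T stirling_series bernoulli_appell binomial_weight; last by lia.
rewrite (_ : (n.-1 - l - j).+1 = n - l - j)%N; last by lia.
by rewrite /fps_expS addnC; ring.
Qed.
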